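(* Let $G$ be the mixed graph on nodes $\{a,b,c,d\}$ with directed edges $a\to b$, $a\to c$, $a\to d$ and bidirected edges $a\leftrightarrow b$, $a\leftrightarrow c$, $a\leftrightarrow d$ (and no other edges). Then every $\Sigma\in\mathcal M(G)$ satisfies $$\rho_{bc.a}\cdot\rho_{cd.a}\cdot\rho_{bd.a}\le 0.$$ Moreover, there is a nonempty open subset of the set of positive definite $4\times4$ matrices (e.g. a neighbourhood of the matrix with $\sigma_{aa}=\sigma_{bb}=\sigma_{cc}=\sigma_{dd}=1$, $\sigma_{ab}=\sigma_{ac}=\sigma_{ad}=0$, $\sigma_{bc}=\sigma_{bd}=\sigma_{cd}=1/2$) violating this inequality, so $\mathcal M(G)$ differs from the set of all positive definite $4\times 4$ matrices by a set of positive measure.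
   Context: $\mathcal M(G)=\{(I-\Lambda)^{-T}\Omega(I-\Lambda)^{-1}\}$ where $\Lambda$ ranges over real $4\times4$ matrices with $\Lambda_{vw}\neq 0$ only for directed edges $v\to w$, and $\Omega$ over positive definite matrices with $\Omega_{vw}=0$ for distinct $v,w$ not joined by a bidirected edge. For a covariance matrix $\Sigma=(\sigma_{vw})$, the partial correlation is $\rho_{xy.a}=(\sigma_{xy}\sigma_{aa}-\sigma_{xa}\sigma_{ya})/\sqrt{(\sigma_{xx}\sigma_{aa}-\sigma_{xa}^2)(\sigma_{yy}\sigma_{aa}-\sigma_{ya}^2)}$. *)

From HB Require Import structures.
From mathcomp Require Import all_boot all_order all_algebra.
Set Implicit Arguments. Unset Strict Implicit. Unset Printing Implicit Defensive.
Import Order.TTheory GRing.Theory Num.Theory.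
Local Open Scope ring_scope.

Definition na : 'I_4 := @Ordinal 4 0 isT.
Definition nb : 'I_4 := @Ordinal 4 1 isT.
Definition nc : 'I_4 := @Ordinal 4 2 isT.
Definition nd : 'I_4 := @Ordinal 4 3 isT.

Definition diredge (v w : 'I_4) : bool :=
  (v == na) && ((w == nb) || (w == nc) || (w == nd)).

Definition biedge (v w : 'I_4) : bool :=
  ((v == na) && ((w == nb) || (w == nc) || (w == nd))) ||
  ((w == na) && ((v == nb) || (v == nc) || (v == nd))).

Definition posdef (R : realFieldType) (n : nat) (A : 'M[R]_n) : Prop :=
  A^T = A /\ forall x : 'cV[R]_n, x != 0 -> 0 < (x^T *m A *m x) 0 0.

Definition inMG (R : realFieldType) (S : 'M[R]_4) : Prop :=
  exists (L O : 'M[R]_4),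
    (forall v w, ~~ diredge v w -> L v w = 0) /\
    posdef O /\
    (forall v w, v != w -> ~~ biedge v w -> O v w = 0) /\
    S = (invmx (1%:M - L))^T *m O *m invmx (1%:M - L).

Definition pcor (R : rcfType) (S : 'M[R]_4) (x y a : 'I_4) : R :=
  (S x y * S a a - S x a * S y a) /
  Num.sqrt ((S x x * S a a - S x a ^+ 2) * (S y y * S a a - S y a ^+ 2)).

Definition Sigma0 (R : rcfType) : 'M[R]_4 :=
  \matrix_(i, j) (if i == j then 1 else if (i == na) || (j == na) then 0 else 2^-1).

(* The directed edges only leave a, so I - Lambda is unipotent and its inverse
   I + Lambda adds a multiple of variable a to each of b, c, d.  Partial
   covariances given a are invariant under such moves, hence equal those of
   Omega; as Omega has no b-c, c-d, b-d entries, the three numerators are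
   -w_b w_c, -w_c w_d, -w_b w_d with w_v = Omega_{va}, whose product
   -(w_b w_c w_d)^2 is nonpositive.  At Sigma0 the three partial correlations
   are 1/2, and they stay positive on a ball around it. *)
From HB Require Import structures.
From mathcomp Require Import all_boot all_order all_algebra.
From mathcomp Require Import ring lra.

Set Implicit Arguments.
Unset Strict Implicit.
Unset Printing Implicit Defensive.
Import Order.TTheory GRing.Theory Num.Theory.
Local Open Scope ring_scope.

Lemma sum_ord4 (R : nmodType) (F : 'I_4 -> R) :
  \sum_i F i = F na + F nb + F nc + F nd.
Proof.
rewrite !big_ord_recl big_ord0 addr0 !addrA.
by congr (_ + _ + _ + _); congr F; apply: val_inj.
Qed.

Lemma invmx_1B_sqr0 (R : comUnitRingType) (n : nat) (N : 'M[R]_n) :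
  N *m N = 0 -> invmx (1%:M - N) = 1%:M + N.
Proof.
move=> NN.
have inv1BN : (1%:M - N) *m (1%:M + N) = 1%:M.
  by rewrite mulmxDr mulmx1 mulmxBl mul1mx NN subr0 subrK.
have [unit1BN _] := mulmx1_unit inv1BN.
by rewrite -[invmx _]mulmx1 -[X in invmx _ *m X]inv1BN mulmxA mulVmx ?mul1mx.
Qed.

Definition pcov (R : pzRingType) (S : 'M[R]_4) (x y a : 'I_4) : R :=
  S x y * S a a - S x a * S y a.

Section DirectedEdgesFromA.

Variables (R : comPzRingType) (L : 'M[R]_4).
Hypothesis L_dir : forall v w, ~~ diredge v w -> L v w = 0.

Lemma dir_row0 i j : i != na -> L i j = 0.
Proof. by move=> /negbTE ia; rewrite L_dir // /diredge ia. Qed.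

Lemma dir_col0 i : L i na = 0.
Proof. by rewrite L_dir // /diredge andbC. Qed.

Lemma dir_trmx_mulmx (n : nat) (M : 'M[R]_(4, n)) :
  L^T *m M = \matrix_(i, j) (L na i * M na j).
Proof.
apply/matrixP => i j; rewrite !mxE (bigD1 na) //= big1 ?addr0 => [|k ka].
  by rewrite mxE.
by rewrite mxE dir_row0 ?mul0r.
Qed.

Lemma mulmx_dir (m : nat) (M : 'M[R]_(m, 4)) :
  M *m L = \matrix_(i, j) (M i na * L na j).
Proof.
apply/matrixP => i j; rewrite !mxE (bigD1 na) //= big1 ?addr0 // => k ka.
by rewrite dir_row0 ?mulr0.
Qed.

Lemma dir_mx_sqr0 : L *m L = 0.
Proof. by apply/matrixP => i j; rewrite mulmx_dir !mxE dir_col0 mul0r. Qed.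

Lemma dir_congr_mxE (O : 'M[R]_4) x y :
  ((1%:M + L)^T *m O *m (1%:M + L)) x y =
  O x y + L na x * O na y + (O x na + L na x * O na na) * L na y.
Proof.
rewrite [(_ + L)^T]linearD /= trmx1 mulmxDl mul1mx mulmxDr mulmx1.
by rewrite mulmx_dir dir_trmx_mulmx !mxE.
Qed.

Lemma pcov_dir_congr (O : 'M[R]_4) x y :
  O^T = O -> pcov ((1%:M + L)^T *m O *m (1%:M + L)) x y na = pcov O x y na.
Proof.
move=> O_sym; have Osym i j : O i j = O j i by rewrite -{1}O_sym mxE.
rewrite /pcov !dir_congr_mxE dir_col0 (Osym na y); ring.
Qed.

End DirectedEdgesFromA.

Lemma pcorE (R : rcfType) (S : 'M[R]_4) a x y :
  pcor S x y a = pcov S x y a / Num.sqrt (pcov S x x a * pcov S y y a).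
Proof. by rewrite /pcor /pcov !expr2. Qed.

Lemma pcor_prod_le0 (R : rcfType) (S : 'M[R]_4) a x y z :
  pcov S x y a * pcov S y z a * pcov S x z a <= 0 ->
  pcor S x y a * pcor S y z a * pcor S x z a <= 0.
Proof.
move=> cov_le0; rewrite !pcorE !mulf_div.
by rewrite mulr_le0_ge0 // invr_ge0 !mulr_ge0 ?sqrtr_ge0.
Qed.

Lemma pcor_gt0 (R : rcfType) (S : 'M[R]_4) a x y :
  0 < pcov S x y a -> 0 < pcov S x x a -> 0 < pcov S y y a -> 0 < pcor S x y a.
Proof. by move=> xy_gt0 xx_gt0 yy_gt0; rewrite pcorE divr_gt0 // sqrtr_gt0 mulr_gt0. Qed.

Lemma near_pcov_gt0 (R : realFieldType) (sxy saa sxa sya : R) :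
  2/5 < sxy -> 9/10 < saa -> `|sxa| < 1/10 -> `|sya| < 1/10 ->
  0 < sxy * saa - sxa * sya.
Proof.
move=> sxy_gt saa_gt sxa_lt sya_lt.
have : sxa * sya <= `|sxa| * `|sya| by rewrite -normrM ler_norm.
have : `|sxa| * `|sya| < 1/10 * (1/10) by rewrite ltr_pM.
have : 2/5 * (9/10) < sxy * saa by rewrite ltr_pM //; lra.
lra.
Qed.

Lemma pcor_gt0_near_Sigma0 (R : rcfType) (S : 'M[R]_4) x y :
  (forall i j, `|S i j - Sigma0 R i j| < 1/10) -> x != na -> y != na ->
  0 < pcor S x y na.
Proof.
move=> near xa ya.
have Saa : 9/10 < S na na.
  by move: (near na na); rewrite mxE eqxx ltr_distl => /andP[? _]; lra.
have Sua u : u != na -> `|S u na| < 1/10.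
  by move: (near u na) => + /negbTE ua; rewrite mxE ua eqxx orbT subr0.
have Suv u v : u != na -> v != na -> 2/5 < S u v.
  move: (near u v) => + /negbTE ua /negbTE va; rewrite mxE ua va ltr_distl.
  by case: (u == v) => /= /andP[? _]; lra.
by apply: pcor_gt0; apply: near_pcov_gt0; auto.
Qed.

Lemma cV_sqr_sum_gt0 (R : realDomainType) (n : nat) (x : 'cV[R]_n) :
  x != 0 -> 0 < \sum_i x i 0 ^+ 2.
Proof.
move=> x_neq0; rewrite lt_def sumr_ge0 ?andbT => [|i _]; last exact: sqr_ge0.
apply: contra x_neq0 => /eqP /(psumr_eq0P (fun i _ => sqr_ge0 (x i 0))) sum0.
by apply/eqP/matrixP => i j; rewrite ord1 mxE; apply/eqP; rewrite -sqrf_eq0 sum0.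
Qed.

Lemma Sigma0_posdef (R : rcfType) : posdef (Sigma0 R).
Proof.
split; first by apply/matrixP => i j; rewrite !mxE (eq_sym j i) [(j == na) || _]orbC.
move=> x /cV_sqr_sum_gt0; rewrite sum_ord4 => sum_sqr_gt0.
(* x^T Sigma0 x = x_a^2 + (x_b^2 + x_c^2 + x_d^2)/2 + (x_b + x_c + x_d)^2/2 *)
have := sqr_ge0 (x na 0); have := sqr_ge0 (x nb 0 + x nc 0 + x nd 0).
rewrite !(mxE, sum_ord4) /=; nra.
Qed.

Theorem proposition2 (R : rcfType) :
  (forall S : 'M[R]_4, inMG S ->
     pcor S nb nc na * pcor S nc nd na * pcor S nb nd na <= 0) /\
  (posdef (Sigma0 R) /\
   exists eps : R, 0 < eps /\
     forall S : 'M[R]_4, posdef S ->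
       (forall i j, `|S i j - Sigma0 R i j| < eps) ->
       0 < pcor S nb nc na * pcor S nc nd na * pcor S nb nd na).
Proof.
split.
  move=> S [L [O [L_dir [[O_sym _] [O_bi ->]]]]].
  rewrite invmx_1B_sqr0 ?dir_mx_sqr0 //; apply: pcor_prod_le0.
  rewrite !pcov_dir_congr // /pcov (O_bi nb nc) ?(O_bi nc nd) ?(O_bi nb nd) // !mul0r !sub0r.
  have := sqr_ge0 (O nb na * O nc na * O nd na); nra.
split; first exact: Sigma0_posdef.
exists (1/10); split => [|S _ near]; first lra.
by rewrite mulr_gt0 ?pcor_gt0_near_Sigma0 // mulr_gt0 ?pcor_gt0_near_Sigma0.
Qed.
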